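(* Let $U$ satisfy the standing assumption below with constant $c$. The set of exponential stopping times $$E=\{t:\ t=t_p\text{ for some program }p\text{ with }t_p>2^{2|p|+2c+1}\}$$ has effective zero density. That is, there is a computable function $B$ such that for every $k\ge1$ and every $T>B(k)$, $$\#\{t\in E:1\le t\le T\}/T<2^{-k}.$$
   Context: Strings are binary and $|x|$ is the length of $x$. $\mathrm{bin}:\{1,2,\dots\}\to\Sigma^*$ sends $n$ to its binary expansion with the leading $1$ removed. $U$ is a fixed universal Turing machine, and $\nabla(x)=\min\{n\ge1:U(\mathrm{bin}(n))=x\}$. $t_p$ is the exact step at which $U(p)$ halts, with $t_p=\infty$ if it never halts. Standing assumption: there is a computable transformation $p\mapsto time(p)$ and a positive integer constant $c$ such that, for every program $p$: (i) $U(p)$ halts if and only if $U(time(p))$ halts; (ii) $|time(p)|\le|p|+c$; (iii) if $U(p)$ halts, then $U(time(p))=\mathrm{bin}(t_p)$. *)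

From mathcomp Require Import all_boot all_algebra.
From Stdlib Require BinNat BinPos List.
From mathcomp Require Import boolp.

Set Implicit Arguments.
Unset Strict Implicit.
Unset Printing Implicit Defensive.

(* binary expansion of a positive number, leading 1 removed *)
Fixpoint binpos (p : BinNums.positive) : seq bool :=
  match p with
  | BinNums.xH => [::]
  | BinNums.xO q => rcons (binpos q) false
  | BinNums.xI q => rcons (binpos q) true
  end.

(* bin : {1,2,...} -> Sigma^*  (bin 0 is an irrelevant default [::]) *)
Definition bin (n : nat) : seq bool :=
  match BinNat.N.of_nat n with
  | BinNums.N0 => [::]
  | BinNums.Npos p => binpos p
  end.

(* inverse encoding of strings as positive naturals: the number whose binary
   expansion is 1 followed by s; bin (strcode s) = s *)
Definition strcode (s : seq bool) : nat :=
  foldl (fun acc (b : bool) => (2 * acc + b)%N) 1%N s.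

Inductive rcode : Type :=
| RZero
| RSucc
| RProj (i : nat)
| RComp (f : rcode) (gs : list rcode)
| RPrec (f g : rcode)
| RMu (f : rcode).

Inductive reval : rcode -> list nat -> nat -> Prop :=
| reZero v : reval RZero v 0
| reSucc x v : reval RSucc (x :: v) x.+1
| reProj i v : (i < size v)%N -> reval (RProj i) v (nth 0%N v i)
| reComp f gs v ys y :
    List.Forall2 (fun g y => reval g v y) gs ys -> reval f ys y ->
    reval (RComp f gs) v y
| rePrec0 f g v y : reval f v y -> reval (RPrec f g) (0%N :: v) y
| rePrecS f g n v r y :
    reval (RPrec f g) (n :: v) r -> reval g (n :: r :: v) y ->
    reval (RPrec f g) (n.+1 :: v) y
| reMu f v n :
    reval f (n :: v) 0 ->
    (forall m, (m < n)%N -> exists r, r <> 0%N /\ reval f (m :: v) r) ->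
    reval (RMu f) v n.

Definition computable (B : nat -> nat) : Prop :=
  exists e : rcode, forall n, reval e [:: n] (B n).

Definition str_computable (F : seq bool -> seq bool) : Prop :=
  exists G : nat -> nat, computable G /\ forall s, strcode (F s) = G (strcode s).

(* A machine is modeled by its step-bounded run:
   run p n = Some x  iff  U(p) has halted within n steps with output x. *)
Definition machine := seq bool -> nat -> option (seq bool).

(* well-formedness: once halted, stays halted with the same output;
   no program halts at step 0 (steps are counted from 1). *)
Definition machine_wf (run : machine) : Prop :=
  (forall p n x, run p n = Some x -> run p n.+1 = Some x) /\
  (forall p, run p 0%N = None).

Definition halts (run : machine) (p : seq bool) : Prop :=
  exists n x, run p n = Some x.

Definition halts_at (run : machine) (p : seq bool) (t : nat) : Prop :=
  run p t <> None /\ forall s, (s < t)%N -> run p s = None.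

Definition outputs (run : machine) (p x : seq bool) : Prop :=
  exists n, run p n = Some x.

Definition standing_assumption (run : machine) (c : nat) : Prop :=
  exists time : seq bool -> seq bool,
    str_computable time /\
    (forall p, halts run p <-> halts run (time p)) /\
    (forall p, (size (time p) <= size p + c)%N) /\
    (forall p t, halts_at run p t -> outputs run (time p) (bin t)).

Definition exp_stopping_time (run : machine) (c t : nat) : Prop :=
  exists p, halts_at run p t /\ (2 ^ (2 * size p + 2 * c + 1) < t)%N.

Definition count_E (run : machine) (c T : nat) : nat :=
  count (fun t => `[< exp_stopping_time run c t >]) (iota 1 T).

(** Compress each exponential stopping time t = t_p into the program time(p),
    which prints bin t and has length at most |p| + c; hence
    2^(2|time p| + 1) < t.  Distinct stopping times are printed by distinct
    programs, and for t <= T these programs have length at most the largest L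
    with 2^(2L+1) < T, so there are fewer than 2^(L+1) of them.  Taking
    B(k) = 2^(2k+1), one gets 2^(L+1) * 2^k <= T for every T > B(k). *)

From mathcomp Require Import all_boot all_algebra.
From mathcomp Require Import boolp zify.
Import GRing.Theory Num.Theory.

Set Implicit Arguments.
Unset Strict Implicit.

Lemma reval_comp2 f g1 g2 v y1 y2 y :
  reval g1 v y1 -> reval g2 v y2 -> reval f [:: y1; y2] y ->
  reval (RComp f [:: g1; g2]) v y.
Proof. by move=> h1 h2; apply: reComp; do 2 (constructor; first by []); constructor. Qed.

Definition rc_add := RPrec (RProj 0) (RComp RSucc [:: RProj 1]).

Lemma reval_add a b : reval rc_add [:: a; b] (a + b).
Proof.
elim: a => [|a IH]; first by apply: rePrec0; apply: (@reProj 0 [:: b]).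
apply: rePrecS IH _; apply: (reComp (ys := [:: a + b])); last exact: reSucc.
by constructor; [apply: (@reProj 1 [:: a; a + b; b]) | constructor].
Qed.

Definition rc_twice_pow4 :=
  let double := RComp rc_add [:: RProj 1; RProj 1] in
  RPrec (RComp RSucc [:: RComp RSucc [:: RZero]]) (RComp rc_add [:: double; double]).

Lemma computable_twice_pow4 : computable (fun k => 2 * 4 ^ k).
Proof.
exists rc_twice_pow4; elim=> [|n IH].
  apply: rePrec0; apply: (reComp (ys := [:: 1])); last exact: reSucc.
  constructor; last constructor.
  by apply: (reComp (ys := [:: 0])); [do 2 constructor | exact: reSucc].
apply: rePrecS IH _; set r := 2 * 4 ^ n.
have dbl : reval (RComp rc_add [:: RProj 1; RProj 1]) [:: n; r] (r + r).
  by apply: reval_comp2 (reval_add _ _); apply: (@reProj 1 [:: n; r]).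
have -> : 2 * 4 ^ n.+1 = (r + r) + (r + r) by rewrite /r expnS; lia.
exact: (reval_comp2 dbl dbl (reval_add _ _)).
Qed.

Lemma binpos_inj : injective binpos.
Proof.
elim=> [p IH|p IH|] [q|q|] //= H;
  try (by case: (rcons_inj H) => /IH ->);
  try (by case: (rcons_inj H));
  by move: H; case: (binpos _).
Qed.

Lemma bin_inj t1 t2 : 0 < t1 -> 0 < t2 -> bin t1 = bin t2 -> t1 = t2.
Proof.
rewrite /bin => t1_gt0 t2_gt0.
case E1: (BinNat.N.of_nat t1) => [|p1]; first by move: E1; case: t1 t1_gt0.
case E2: (BinNat.N.of_nat t2) => [|p2]; first by move: E2; case: t2 t2_gt0.
by move/binpos_inj => e; subst; apply: Nnat.Nat2N.inj; rewrite E1 E2.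
Qed.

Fixpoint strings_of_size n : seq (seq bool) :=
  if n is n'.+1 then [seq b :: s | b <- [:: true; false], s <- strings_of_size n']
  else [:: [::]].

Lemma size_strings_of_size n : size (strings_of_size n) = 2 ^ n.
Proof. by elim: n => //= n IH; rewrite size_cat !size_map IH expnS cats0 size_map; lia. Qed.

Lemma mem_strings_of_size s : s \in strings_of_size (size s).
Proof. by elim: s => // b s IH; apply/allpairsP; exists (b, s); case: b. Qed.

Fixpoint strings_upto n : seq (seq bool) :=
  if n is n'.+1 then strings_of_size n ++ strings_upto n' else strings_of_size 0.

Lemma size_strings_upto n : size (strings_upto n) < 2 ^ n.+1.
Proof.
elim: n => //= n IH; rewrite size_cat (size_strings_of_size n.+1).
by move: IH; rewrite !expnS; lia.
Qed.

Lemma mem_strings_upto s n : size s <= n -> s \in strings_upto n.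
Proof.
elim: n => [|n IH]; first by case: s.
rewrite leq_eqVlt mem_cat => /orP [/eqP <-|]; first by rewrite mem_strings_of_size.
by rewrite ltnS => /IH ->; rewrite orbT.
Qed.

Section Machine.

Variable run : machine.
Hypothesis run_wf : machine_wf run.

Lemma run_mono p n m x : run p n = Some x -> n <= m -> run p m = Some x.
Proof.
case: run_wf => run_step _ halted; elim: m => [|m IH]; first by rewrite leqn0 => /eqP <-.
by rewrite leq_eqVlt => /orP [/eqP <- //|]; rewrite ltnS => /IH; apply: run_step.
Qed.

Lemma outputs_fun q x y : outputs run q x -> outputs run q y -> x = y.
Proof.
move=> [n hn] [m hm].
have := run_mono hn (leq_maxl n m); rewrite (run_mono hm (leq_maxr n m)).
by case.
Qed.

(* Distinct positive numbers have distinct binary expansions, hence are printed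
   by distinct programs; programs of length at most L are fewer than 2^(L+1). *)
Lemma size_printed_by_short_programs (S : seq nat) L :
    uniq S ->
    {in S, forall t, 0 < t /\ exists2 q, size q <= L & outputs run q (bin t)} ->
  size S < 2 ^ L.+1.
Proof.
move=> uniqS printed.
have [f hf] : {f : nat -> seq bool & forall t, t \in S ->
    size (f t) <= L /\ outputs run (f t) (bin t)}.
  apply: (@choice _ _ (fun t q => t \in S -> size q <= L /\ outputs run q (bin t))) => t.
  case: (boolP (t \in S)) => [/printed [_ [q]]|_]; last by exists [::].
  by exists q.
apply: leq_ltn_trans (size_strings_upto L); rewrite -(size_map f).
apply: uniq_leq_size => [|_ /mapP [t /hf [fL _] ->]]; last exact: mem_strings_upto.
rewrite map_inj_in_uniq // => t1 t2 t1S t2S f12.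
have [_ o1] := hf _ t1S; have [_ o2] := hf _ t2S; rewrite f12 in o1.
by apply: bin_inj; [case: (printed _ t1S) | case: (printed _ t2S) |
  exact: outputs_fun o1 o2].
Qed.

Lemma exp_stopping_time_printed c t :
    standing_assumption run c -> exp_stopping_time run c t ->
  exists2 q, 2 ^ (2 * size q + 1) < t & outputs run q (bin t).
Proof.
move=> [time [_ [_ [size_time time_out]]]] [p [halt_p p_exp]].
exists (time p); last exact: time_out.
by apply: leq_ltn_trans p_exp; rewrite leq_exp2l //; have := size_time p; lia.
Qed.

End Machine.

Lemma ex_max_exp_size T : 2 < T ->
  exists2 L, 2 ^ (2 * L + 1) < T & forall n, 2 ^ (2 * n + 1) < T -> n <= L.
Proof.
move=> T_gt2.
have exP : exists n, 2 ^ (2 * n + 1) < T by exists 0.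
have ubP n : 2 ^ (2 * n + 1) < T -> n <= T.
  move=> hn; apply/ltnW/(leq_ltn_trans _ hn)/(leq_trans (ltnW (ltn_expl n (isT : 1 < 2)))).
  by rewrite leq_exp2l //; lia.
by case: (ex_maxnP exP ubP) => L; exists L.
Qed.

Lemma expn_density_bound k L T :
  2 ^ (2 * k + 1) < T -> 2 ^ (2 * L + 1) < T -> 2 ^ (L.+1 + k) <= T.
Proof.
move=> kT LT; case: (leqP L k) => [Lk|kL].
  by apply: leq_trans (ltnW kT); rewrite leq_exp2l //; lia.
by apply: leq_trans (ltnW LT); rewrite leq_exp2l //; lia.
Qed.

Lemma ratio_lt_exp2N (a b m : nat) : a * 2 ^ m < b -> (a%:R / b%:R < (2%:R ^- m : rat))%R.
Proof.
move=> h; have b_gt0 : ((0 : rat) < b%:R)%R by rewrite ltr0n; case: b h.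
rewrite ltr_pdivrMr // mulrC ltr_pdivlMr ?exprn_gt0 ?ltr0n //.
by rewrite -natrX -natrM ltr_nat.
Qed.

Theorem mainTheorem9 (run : machine) (c : nat) :
  machine_wf run -> (0 < c)%N -> standing_assumption run c ->
  exists B : nat -> nat, computable B /\
    forall k : nat, (1 <= k)%N -> forall T : nat, (B k < T)%N ->
      ((count_E run c T)%:R / T%:R < (2%:R ^- k : rat))%R.
Proof.
move=> wf _ std; exists (fun k => 2 * 4 ^ k); split; first exact: computable_twice_pow4.
move=> k _ T; have -> : 2 * 4 ^ k = 2 ^ (2 * k + 1) by rewrite expnD expnM mulnC.
move=> kT.
have T_gt2 : 2 < T.
  by apply: leq_ltn_trans kT; rewrite addn1 expnS leq_pmulr // expn_gt0.
have [L LT maxL] := ex_max_exp_size T_gt2.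
set S := [seq t <- iota 1 T | `[< exp_stopping_time run c t >]].
have -> : count_E run c T = size S by rewrite /count_E size_filter.
apply: ratio_lt_exp2N; apply: leq_trans (expn_density_bound kT LT).
rewrite expnD ltn_pmul2r ?expn_gt0 //.
apply: (size_printed_by_short_programs wf (filter_uniq _ (iota_uniq _ _))).
move=> t; rewrite mem_filter mem_iota add1n ltnS => /andP [/asboolP Et /andP [t_gt0 tT]].
split=> //; have [q qt out] := exp_stopping_time_printed std Et.
by exists q => //; apply/maxL/(leq_trans qt).
Qed.
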